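(* Let $G$ be a discrete abelian group (written additively), $\alpha\in\mathcal C_c(G,\mathbf k)$, and consider the convolution equation $\sigma(s)=\alpha\star s$, i.e. $s_g^{(t+1)}=\sum_{h\in G}\alpha_h^{(t)}s_{g-h}^{(t)}$. Let $L^{\rm per}$ be the smallest $\sigma$-subring of ${\rm Seq}(\mathbf C)$ containing $\mathbf k$ and all values $s_g^{(t)}$ of solutions $s$ that are $H$-periodic for some subgroup $H$ of finite index in $G$. Then $$L^{\rm per}=\mathbf k\Big[\prod_{\tau=0}^{t-1}\hat\alpha_\theta^{(\tau)} : \theta\in{\rm Tor}(\widehat G)\Big],$$ where for $\theta\in\widehat G$, $\hat\alpha_\theta^{(\tau)}=\sum_{g\in G}\alpha^{(\tau)}_g\theta(g)$ and $\prod_{\tau=0}^{t-1}\hat\alpha^{(\tau)}_\theta$ denotes the sequence indexed by $t$.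
   Context: ${\rm Seq}(\mathbf C)$ is the ring of complex sequences indexed by $t\in\mathbf Z_{\ge0}$ with shift $\sigma(x)^{(t)}=x^{(t+1)}$; $\mathbf k\subseteq{\rm Seq}(\mathbf C)$ is a $\sigma$-stable subring with constants $\mathbf C$; $\mathcal C_c(G,\mathbf k)$ is the set of finitely supported functions $G\to\mathbf k$. A function $s:G\to{\rm Seq}(\mathbf C)$ is $H$-periodic if $s_{g}=s_{g+h}$ for all $g\in G$, $h\in H$. $\widehat G$ is the group of homomorphisms $G\to\mathbf S^1\subset\mathbf C^*$ and ${\rm Tor}(\widehat G)$ its subgroup of finite-order elements. *)

From HB Require Import structures.
From mathcomp Require Import all_boot all_order all_algebra.
From mathcomp Require Import boolp classical_sets cardinality fsbigop reals.
From mathcomp Require Import complex.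
Set Implicit Arguments. Unset Strict Implicit. Unset Printing Implicit Defensive.
Import Order.TTheory GRing.Theory Num.Theory.
Local Open Scope ring_scope.
Local Open Scope classical_set_scope.

(* Seq(C): complex sequences indexed by t : nat, with pointwise ring operations. *)
Definition Seq (R : realType) := nat -> R[i].

Definition shift (R : realType) (x : Seq R) : Seq R := fun t => x t.+1.

Definition cseq (R : realType) (c : R[i]) : Seq R := fun _ => c.

Definition is_subring (R : realType) (S : set (Seq R)) : Prop :=
  [/\ S (cseq 1),
      (forall x y, S x -> S y -> S (fun t => x t - y t)) &
      (forall x y, S x -> S y -> S (fun t => x t * y t))].

Definition is_sigma_subring (R : realType) (S : set (Seq R)) : Prop :=
  is_subring S /\ (forall x, S x -> S (shift x)).

(* k is a sigma-stable subring of Seq(C) whose ring of constants is C,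
   i.e. k contains every constant sequence (in Seq(C) the sigma-fixed
   elements are exactly the constant sequences). *)
Definition is_base_ring (R : realType) (k : set (Seq R)) : Prop :=
  is_sigma_subring k /\ (forall c : R[i], k (cseq c)).

Definition gen_ring (R : realType) (A : set (Seq R)) : set (Seq R) :=
  fun x => forall S, is_subring S -> A `<=` S -> S x.

Definition gen_sigma_ring (R : realType) (A : set (Seq R)) : set (Seq R) :=
  fun x => forall S, is_sigma_subring S -> A `<=` S -> S x.

Definition fin_supp_in (R : realType) (G : zmodType) (k : set (Seq R))
    (alpha : G -> Seq R) : Prop :=
  (forall g, k (alpha g)) /\ finite_set [set g | alpha g <> cseq 0].

Definition is_solution (R : realType) (G : zmodType) (alpha s : G -> Seq R) : Prop :=
  forall (g : G) (t : nat),
    s g t.+1 = \sum_(h \in [set: G]) alpha h t * s (g - h) t.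

Definition is_subgroup (G : zmodType) (H : set G) : Prop :=
  [/\ H 0, (forall x, H x -> H (- x)) & (forall x y, H x -> H y -> H (x + y))].

Definition finite_index (G : zmodType) (H : set G) : Prop :=
  exists r : seq G, forall g, exists2 x, x \in r & H (g - x).

Definition periodic (R : realType) (G : zmodType) (H : set G) (s : G -> Seq R) : Prop :=
  forall g h, H h -> s (g + h) = s g.

Definition L_per (R : realType) (G : zmodType) (k : set (Seq R)) (alpha : G -> Seq R)
  : set (Seq R) :=
  gen_sigma_ring (k `|` [set x | exists (s : G -> Seq R) (H : set G) (g : G),
        [/\ is_subgroup H, finite_index H, is_solution alpha s, periodic H s
          & x = s g]]).

Definition is_character (R : realType) (G : zmodType) (theta : G -> R[i]) : Prop :=
  (forall x y, theta (x + y) = theta x * theta y) /\ (forall x, `|theta x| = 1).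

Definition is_torsion_character (R : realType) (G : zmodType) (theta : G -> R[i]) : Prop :=
  is_character theta /\ exists n : nat, (0 < n)%N /\ forall x, theta x ^+ n = 1.

Definition alpha_hat (R : realType) (G : zmodType) (alpha : G -> Seq R)
    (theta : G -> R[i]) : Seq R :=
  fun tau => \sum_(g \in [set: G]) alpha g tau * theta g.

Definition alpha_hat_prod (R : realType) (G : zmodType) (alpha : G -> Seq R)
    (theta : G -> R[i]) : Seq R :=
  fun t => \prod_(tau < t) alpha_hat alpha theta tau.

From HB Require Import structures.
From mathcomp Require Import all_boot all_order all_algebra all_field.
From mathcomp Require Import boolp classical_sets cardinality fsbigop reals.
From mathcomp Require Import complex ring.
Import Order.TTheory GRing.Theory Num.Theory.
Local Open Scope ring_scope.
Local Open Scope classical_set_scope.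

(* The equation is linear in [s], and a solution is determined by its initial
   values [s_g^(0)].  For a character [theta], the initial values [g |-> theta g]
   evolve into [theta g * prod_(tau < t) hat alpha_(theta^-1)^(tau)], and this
   solution is periodic modulo [ker theta], which has finite index when [theta]
   is torsion.  Conversely, if [H] has finite index then [M G <= H] for some
   [M > 0]; diagonalising the translations by a set of coset representatives
   with the discrete Fourier transform over the [M]-th roots of unity writes any
   [H]-periodic [f : G -> C] as a finite sum of multiples of torsion characters.
   Hence every periodic solution has values in the ring generated by [k] and the
   products [prod_(tau < t) hat alpha_theta^(tau)], and this ring is
   sigma-stable because [hat alpha_theta] lies in [k]. *)

Lemma prim_root_exists (F : numClosedFieldType) (n : nat) :
  (0 < n)%N -> exists z : F, n.-primitive_root z.
Proof.
move=> n_gt0; have [r Dp] := closed_field_poly_normal ('X^n - 1 : {poly F}).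
rewrite (monicP _) ?monicXnsubC // scale1r in Dp.
have rn1 : all n.-unity_root r by apply/allP=> z; rewrite -root_prod_XsubC -Dp.
have sz_r : (n <= size r)%N.
  by rewrite -ltnS -(size_prod_XsubC r id) -Dp size_XnsubC.
have [|z] := hasP (cyclic.has_prim_root n_gt0 rn1 _ sz_r); last by exists z.
by rewrite -separable_prod_XsubC -Dp separable_Xn_sub_1 // pnatr_eq0 -lt0n.
Qed.

Section Subrings.
Context {R : realType}.
Implicit Types (S A : set (Seq R)) (x y : Seq R).

Lemma subring0 {S} : is_subring S -> S (cseq 0).
Proof.
case=> S1 SB _; have := SB _ _ S1 S1.
by congr S; apply: funext => t; rewrite /cseq subrr.
Qed.

Lemma subringD {S x y} : is_subring S -> S x -> S y -> S (fun t => x t + y t).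
Proof.
move=> hS Sx Sy; have S0 := subring0 hS; case: hS => _ SB _.
have := SB _ _ Sx (SB _ _ S0 Sy).
by congr S; apply: funext => t; rewrite /cseq sub0r opprK.
Qed.

Lemma subringM {S x y} : is_subring S -> S x -> S y -> S (fun t => x t * y t).
Proof. by case=> _ _; apply. Qed.

Lemma subring_sum {I : Type} {S} (r : seq I) (F : I -> Seq R) :
  is_subring S -> (forall i, S (F i)) -> S (fun t => \sum_(i <- r) F i t).
Proof.
move=> hS SF; elim: r => [|i r IH].
  by have := subring0 hS; congr S; apply: funext => t; rewrite big_nil.
by have := subringD hS (SF i) IH; congr S; apply: funext => t; rewrite big_cons.
Qed.

Lemma gen_ring_subring A : is_subring (gen_ring A).
Proof.
split=> [S [] //|x y Ax Ay S hS AS|x y Ax Ay S hS AS]; case: (hS) => _ SB SM.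
  by apply: SB; [apply: Ax | apply: Ay].
by apply: SM; [apply: Ax | apply: Ay].
Qed.

Lemma sub_gen_ring {A} : A `<=` gen_ring A.
Proof. by move=> x Ax S _; apply. Qed.

Lemma gen_ring_min {A S} : is_subring S -> A `<=` S -> gen_ring A `<=` S.
Proof. by move=> hS AS x; apply. Qed.

(* The shift commutes with the pointwise ring operations, so the elements of
   [gen_ring A] whose shift stays in [gen_ring A] form a subring. *)
Lemma gen_ring_sigma {A} :
  (forall x, A x -> gen_ring A (shift x)) -> is_sigma_subring (gen_ring A).
Proof.
move=> shA; split=> [|x]; first exact: gen_ring_subring.
have [R1 RB RM] := gen_ring_subring A.
pose T := [set y | gen_ring A y /\ gen_ring A (shift y)].
have T_subring : is_subring T.
  split=> [//|y z [? ?] [? ?]|y z [? ?] [? ?]].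
    by split; [exact: RB | exact: (RB (shift y) (shift z))].
  by split; [exact: RM | exact: (RM (shift y) (shift z))].
have AT : A `<=` T by move=> y Ay; split; [exact: sub_gen_ring | exact: shA].
by move=> /(gen_ring_min T_subring AT) [].
Qed.

Lemma gen_sigma_ring_sigma A : is_sigma_subring (gen_sigma_ring A).
Proof.
split; first split=> [S [[]] //|x y Ax Ay S hS AS|x y Ax Ay S hS AS].
- by case: (hS) => -[_ SB _] _; apply: SB; [apply: Ax | apply: Ay].
- by case: (hS) => -[_ _ SM] _; apply: SM; [apply: Ax | apply: Ay].
by move=> x Ax S hS AS; case: (hS) => _; apply; apply: Ax.
Qed.

Lemma sub_gen_sigma_ring {A} : A `<=` gen_sigma_ring A.
Proof. by move=> x Ax S _; apply. Qed.

Lemma gen_sigma_ring_min {A S} :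
  is_sigma_subring S -> A `<=` S -> gen_sigma_ring A `<=` S.
Proof. by move=> hS AS x; apply. Qed.

End Subrings.

Section Subgroups.
Context {G : zmodType} {H : set G} (H_subgroup : is_subgroup H).

Lemma subgroup0 : H 0. Proof. by case: H_subgroup. Qed.

Lemma subgroupN {x} : H x -> H (- x). Proof. by case: H_subgroup => _ + _; apply. Qed.

Lemma subgroupD {x y} : H x -> H y -> H (x + y).
Proof. by case: H_subgroup => _ _; apply. Qed.

Lemma subgroupB {x y} : H x -> H y -> H (x - y).
Proof. by move=> Hx /subgroupN; apply: subgroupD. Qed.

Lemma subgroupMn {x} n : H x -> H (x *+ n).
Proof.
move=> Hx; elim: n => [|n IH]; first by rewrite mulr0n; exact: subgroup0.
by rewrite mulrS; apply: subgroupD.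
Qed.

(* Pigeonhole: two of [x *+ 0], ..., [x *+ size r] lie in the same coset. *)
Lemma finite_index_order x : finite_index H -> exists2 m, (0 < m)%N & H (x *+ m).
Proof.
case=> r hr; have /choice [c hc] : forall g,
    exists i, (i < size r)%N /\ H (g - nth 0 r i).
  move=> g; have [y yr Hgy] := hr g.
  by exists (index y r); rewrite index_mem nth_index.
pose f (j : 'I_(size r).+1) : 'I_(size r) := Ordinal (hc (x *+ j)).1.
have /injectivePn [i [j /negbTE ij fij]] : ~~ injectiveb f.
  by apply/injectiveP => /leq_card; rewrite !card_ord ltnn.
have Hij : H (x *+ i - x *+ j).
  have := subgroupB (hc (x *+ i)).2 (hc (x *+ j)).2.
  by move/(congr1 val): fij => /= ->; rewrite opprB addrA subrK.
have [lt_ij|lt_ji|/val_inj eq_ij] := ltngtP i j; last by rewrite eq_ij eqxx in ij.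
- exists (j - i)%N; first by rewrite subn_gt0.
  by rewrite (mulrnBr _ (ltnW lt_ij)); have := subgroupN Hij; rewrite opprB.
- by exists (i - j)%N; rewrite ?subn_gt0 // (mulrnBr _ (ltnW lt_ji)).
Qed.

Lemma finite_index_mulrn : finite_index H -> exists2 M, (0 < M)%N & forall g, H (g *+ M).
Proof.
move=> fi; have [r hr] := fi.
have [M M_gt0 HrM] : exists2 M, (0 < M)%N & forall x, x \in r -> H (x *+ M).
  elim: r {hr} => [|x r [M M_gt0 HrM]]; first by exists 1%N.
  have [m m_gt0 Hxm] := finite_index_order x fi.
  exists (m * M)%N => [|y]; first by rewrite muln_gt0 m_gt0.
  rewrite inE => /orP[/eqP-> | yr]; first by rewrite mulrnA; apply: subgroupMn.
  by rewrite mulnC mulrnA; apply/subgroupMn/HrM.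
exists M => // g; have [y yr Hgy] := hr g.
by rewrite -(subrK y g) mulrnDl; apply: subgroupD; [apply: subgroupMn | apply: HrM].
Qed.

End Subgroups.

Section FiniteSums.
Context {T : Type} {V : zmodType}.
Implicit Types (A B : set (T -> V)) (f h : T -> V).

Inductive sums_of A : set (T -> V) :=
  | sums_of0 : sums_of A (fun=> 0)
  | sums_ofDl f h : A f -> sums_of A h -> sums_of A (fun x => f x + h x).
Arguments sums_of0 {A}.
Arguments sums_ofDl {A f h}.

Lemma sums_of1 {A f} : A f -> sums_of A f.
Proof.
move=> Af; have := sums_ofDl Af sums_of0.
by congr sums_of; apply: funext => x; rewrite addr0.
Qed.

Lemma sums_ofD {A f h} : sums_of A f -> sums_of A h -> sums_of A (fun x => f x + h x).
Proof.
move=> sf sh; elim: sf => [|f1 f2 Af1 _ IH].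
  by have := sh; congr sums_of; apply: funext => x; rewrite add0r.
by have := sums_ofDl Af1 IH; congr sums_of; apply: funext => x; rewrite addrA.
Qed.

Lemma sums_of_sum {I : Type} {A} (r : seq I) (F : I -> T -> V) :
  (forall i, A (F i)) -> sums_of A (fun x => \sum_(i <- r) F i x).
Proof.
move=> AF; elim: r => [|i r IH].
  by have := @sums_of0 A; congr sums_of; apply: funext => x; rewrite big_nil.
by have := sums_ofDl (AF i) IH; congr sums_of; apply: funext => x; rewrite big_cons.
Qed.

Lemma sums_of_trans {A B f} :
  (forall h, A h -> sums_of B h) -> sums_of A f -> sums_of B f.
Proof.
by move=> AB; elim=> [|f1 f2 /AB Bf1 _ IH]; [exact: sums_of0 | exact: sums_ofD].
Qed.

End FiniteSums.

Definition periodic_fun {G : zmodType} {T : Type} (H : set G) (f : G -> T) :=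
  forall g h, H h -> f (g + h) = f g.

Definition translation_eigen {G : zmodType} {F : fieldType} (x : G) (f : G -> F) :=
  exists l, forall g, f (g + x) = l * f g.

Definition joint_eigen {G : zmodType} {F : fieldType} (H : set G) (xs : seq G)
    (f : G -> F) :=
  periodic_fun H f /\ forall x, x \in xs -> translation_eigen x f.

Lemma sum_prim_root_expr (F : fieldType) (M l : nat) (w : F) :
  M.-primitive_root w -> \sum_(j < M) w ^+ (j * l) = if (M %| l)%N then M%:R else 0.
Proof.
move=> wP; under eq_bigr do rewrite mulnC exprM.
case: ifPn => Ml; rewrite (prim_order_dvd wP) in Ml.
  rewrite (eq_bigr (fun=> 1)) ?sumr_const ?card_ord // => j _.
  by rewrite (eqP Ml) expr1n.
have := subrX1 (w ^+ l) M.
rewrite -exprM mulnC exprM (prim_expr_order wP) expr1n subrr => /esym/eqP.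
by rewrite mulf_eq0 subr_eq0 (negbTE Ml) => /eqP.
Qed.

Lemma big_ord_rot (V : zmodType) n (F : nat -> V) :
  F n = F 0%N -> \sum_(l < n) F l.+1 = \sum_(l < n) F l.
Proof.
case: n => [|n] hF; first by rewrite !big_ord0.
by rewrite big_ord_recr [RHS]big_ord_recl /= hF addrC.
Qed.

(* The projection of [f] onto the [w ^- j]-eigenspace of the translation by [x]. *)
Definition eigen_piece {F : fieldType} {G : zmodType} (M : nat) (w : F) (x : G)
    (f : G -> F) (j : nat) : G -> F :=
  fun g => M%:R^-1 * \sum_(l < M) w ^+ (j * l) * f (g + x *+ l).

Section EigenPieces.
Context {F : fieldType} {G : zmodType} {M : nat} {w : F}.
Implicit Types (f : G -> F) (x y g : G).

Lemma sum_eigen_piece x f g :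
  M.-primitive_root w -> \sum_(j < M) eigen_piece M w x f j g = f g.
Proof.
move=> wP; rewrite /eigen_piece -big_distrr /= exchange_big /=.
under eq_bigr do rewrite -big_distrl /= sum_prim_root_expr //.
move: (M) (prim_order_gt0 wP) (prim_root_natf_neq0 wP) => [|n] // _ n_neq0.
rewrite big_ord_recl dvdn0 mulr0n addr0 big1 ?addr0 => [|l _].
  by rewrite mulrA mulVf ?mul1r.
by rewrite gtnNdvd ?mul0r.
Qed.

Lemma eigen_piece_periodic (H : set G) x f j :
  periodic_fun H f -> periodic_fun H (eigen_piece M w x f j).
Proof.
move=> Hf g h Hh; rewrite /eigen_piece; congr (_ * _); apply: eq_bigr => l _.
by rewrite addrAC (Hf _ _ Hh).
Qed.

Lemma eigen_piece_eigen_preserved x y f j :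
  translation_eigen y f -> translation_eigen y (eigen_piece M w x f j).
Proof.
case=> l hl; exists l => g; rewrite /eigen_piece mulrCA; congr (_ * _).
by rewrite big_distrr; apply: eq_bigr => i _; rewrite addrAC hl mulrCA.
Qed.

(* Translating by [x] rotates the summation index cyclically, since [f] is
   invariant under [x *+ M] and [w ^+ (j * M) = 1]. *)
Lemma eigen_piece_eigen x f j : M.-primitive_root w ->
  (forall g, f (g + x *+ M) = f g) -> translation_eigen x (eigen_piece M w x f j).
Proof.
move=> wP fxM; have w_neq0 : w ^+ j != 0.
  by rewrite expf_neq0 // (prim_root_eq0 wP) -lt0n (prim_order_gt0 wP).
exists (w ^+ j)^-1 => g; apply: (mulfI w_neq0); rewrite [RHS]mulrA mulfV // mul1r.
rewrite /eigen_piece mulrCA big_distrr; congr (_ * _) => /=.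
pose T l := w ^+ (j * l) * f (g + x *+ l).
rewrite (eq_bigr (fun l : 'I_M => T l.+1)) => [|l _]; last first.
  by rewrite /T mulrA -exprD mulnS mulrS addrA.
apply: big_ord_rot.
by rewrite /T fxM mulr0n addr0 muln0 mulnC exprM (prim_expr_order wP) !expr1n.
Qed.

End EigenPieces.

Section PeriodicDecomposition.
Context {F : fieldType} {G : zmodType} {H : set G}.

Lemma sums_of_joint_eigen M (w : F) xs (f : G -> F) : M.-primitive_root w ->
  (forall x, x \in xs -> H (x *+ M)) -> periodic_fun H f -> sums_of (joint_eigen H xs) f.
Proof.
move=> wP + Hf; elim: xs => [|x xs IH] HxsM; first by apply: sums_of1; split.
apply: (sums_of_trans _ (IH _)) => [phi [phi_per phi_eig]|y yxs]; last first.
  by apply: HxsM; rewrite inE yxs orbT.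
have -> : phi = (fun g => \sum_(j < M) eigen_piece M w x phi j g).
  by apply: funext => g; rewrite sum_eigen_piece.
apply: sums_of_sum => j; split; first exact: eigen_piece_periodic.
move=> y; rewrite inE => /orP[/eqP-> | /phi_eig]; last exact: eigen_piece_eigen_preserved.
by apply: eigen_piece_eigen => // g; apply/phi_per/HxsM/mem_head.
Qed.

(* As an eigenvector of the translations by a set of coset representatives,
   [phi] is one for every translation, which forces [phi] to be a multiple of
   the multiplicative function [phi g / phi 0]. *)
Lemma joint_eigen_scaled_char {r : seq G} {M} {phi : G -> F} :
  (forall g, exists2 x, x \in r & H (g - x)) -> (forall g, H (g *+ M)) ->
  joint_eigen H r phi -> exists c (theta : G -> F),
    [/\ {morph theta : a b / a + b >-> a * b}, forall g, theta g ^+ M = 1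
      & phi = fun g => c * theta g].
Proof.
move=> hr HM [phi_per phi_eig].
have eig g : exists l, forall a, phi (a + g) = l * phi a.
  have [x xr Hgx] := hr g; have [l hl] := phi_eig x xr.
  by exists l => a; rewrite -(subrK x g) addrA hl phi_per.
have phiD a g : phi (a + g) * phi 0 = phi a * phi g.
  by have [l hl] := eig g; rewrite hl -(add0r g) hl mulrCA mulrA.
have [phi00|phi0_neq0] := eqVneq (phi 0) 0.
  exists 0, (fun=> 1); split=> [a b|g|]; rewrite ?mulr1 ?expr1n //.
  apply: funext => g; have [l hl] := eig g.
  by rewrite -(add0r g) hl phi00 mulr0.
pose theta g := phi g / phi 0.
have thetaD : {morph theta : a b / a + b >-> a * b}.
  by move=> a b; rewrite /theta mulrACA -phiD -mulrA mulVKf.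
have thetaMn g n : theta (g *+ n) = theta g ^+ n.
  elim: n => [|n IH]; first by rewrite mulr0n expr0 /theta mulfV.
  by rewrite mulrS exprS thetaD IH.
exists (phi 0), theta; split=> // [g|].
  by rewrite -thetaMn /theta -[g *+ M]add0r phi_per // mulfV.
by apply: funext => g; rewrite /theta mulrCA mulfV ?mulr1.
Qed.

End PeriodicDecomposition.

Definition scaled_torsion_chars (R : realType) (G : zmodType) : set (G -> R[i]) :=
  [set phi | exists c theta, is_torsion_character theta /\ phi = fun g => c * theta g].

Lemma torsion_characterP {R : realType} {G : zmodType} {theta : G -> R[i]} n :
  (0 < n)%N -> {morph theta : a b / a + b >-> a * b} -> (forall g, theta g ^+ n = 1) ->
  is_torsion_character theta.
Proof.
move=> n_gt0 thetaD thetan; split; last by exists n.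
split=> // g; apply/eqP; rewrite -(pexpr_eq1 n_gt0) ?normr_ge0 //.
by rewrite -normrX thetan normr1.
Qed.

Lemma periodic_sums_of_torsion_chars {R : realType} {G : zmodType} {H : set G}
    {f : G -> R[i]} :
  is_subgroup H -> finite_index H -> periodic_fun H f ->
  sums_of (scaled_torsion_chars R G) f.
Proof.
move=> H_subgroup fi Hf; have [M M_gt0 HM] := finite_index_mulrn H_subgroup fi.
have [w wP] := @prim_root_exists R[i] _ M_gt0; have [r hr] := fi.
apply: (sums_of_trans _ (sums_of_joint_eigen M w r f wP (fun x _ => HM x) Hf)).
move=> phi /(joint_eigen_scaled_char hr HM) [c [theta [thetaD thetaM ->]]].
by apply: sums_of1; exists c, theta; split => //; exact: (torsion_characterP M).
Qed.

Lemma exists_preimage_seq {T U : eqType} (f : T -> U) (vs : seq U) :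
  exists r : seq T, forall t, f t \in vs -> exists2 x, x \in r & f x = f t.
Proof.
elim: vs => [|v vs [r hr]]; first by exists [::].
have [[t0 ft0]|no_pre] := pselect (exists t, f t = v).
  exists (t0 :: r) => t; rewrite inE => /orP[/eqP ftv | /hr[x xr fx]].
    by exists t0; rewrite ?mem_head ?ftv.
  by exists x; rewrite // inE xr orbT.
exists r => t; rewrite inE => /orP[/eqP ftv | /hr //].
by case: no_pre; exists t.
Qed.

Section Characters.
Context {R : realType} {G : zmodType} {theta : G -> R[i]}.
Hypothesis theta_char : is_character theta.

Lemma characterD : {morph theta : a b / a + b >-> a * b}.
Proof. by case: theta_char. Qed.

Lemma character_neq0 g : theta g != 0.
Proof.
by case: theta_char => _ /(_ g) theta1; rewrite -normr_eq0 theta1 oner_neq0.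
Qed.

Lemma character0 : theta 0 = 1.
Proof. by apply: (mulfI (character_neq0 0)); rewrite -characterD addr0 mulr1. Qed.

Lemma characterN g : theta (- g) * theta g = 1.
Proof. by rewrite -characterD addNr character0. Qed.

Lemma character_ker_subgroup : is_subgroup [set g | theta g = 1].
Proof.
split=> /= [|g thg|g h thg thh]; first exact: character0.
  by have := characterN g; rewrite thg mulr1.
by rewrite characterD thg thh mulr1.
Qed.

End Characters.

Lemma torsion_characterN {R : realType} {G : zmodType} {theta : G -> R[i]} :
  is_torsion_character theta -> is_torsion_character (fun g => theta (- g)).
Proof.
case=> -[thetaD theta1] [n [n_gt0 thetan]]; split; last by exists n.
by split=> [a b|g] //; rewrite opprD thetaD.
Qed.

(* A torsion character takes its values among the [n]-th roots of unity, so
   finitely many coset representatives meet all its fibres. *)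
Lemma torsion_character_ker_finite_index {R : realType} {G : zmodType}
    {theta : G -> R[i]} :
  is_torsion_character theta -> finite_index [set g | theta g = 1].
Proof.
case=> theta_char [n [n_gt0 thetan]].
have [w wP] := @prim_root_exists R[i] _ n_gt0.
have [r hr] := exists_preimage_seq theta [seq w ^+ i | i : 'I_n].
exists r => g; have [x xr thx] : exists2 x, x \in r & theta x = theta g.
  by apply: hr; have [i ->] := prim_rootP wP (thetan g); apply: codom_f.
by exists x => //=; rewrite (characterD theta_char) -thx mulrC (characterN theta_char).
Qed.

Lemma alpha_hat_prodS (R : realType) (G : zmodType) (alpha : G -> Seq R)
    (theta : G -> R[i]) t :
  alpha_hat_prod alpha theta t.+1 = alpha_hat_prod alpha theta t * alpha_hat alpha theta t.
Proof. by rewrite /alpha_hat_prod big_ord_recr. Qed.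

Fixpoint evolve {R : realType} {G : zmodType} (alpha : G -> Seq R) (f : G -> R[i])
    (g : G) (t : nat) {struct t} : R[i] :=
  if t is t'.+1 then \sum_(h \in [set: G]) alpha h t' * evolve alpha f (g - h) t'
  else f g.

Section Evolution.
Context {R : realType} {G : zmodType} {alpha : G -> Seq R}.
Local Notation C := R[i].

Lemma evolve_solution f : is_solution alpha (evolve alpha f).
Proof. by []. Qed.

Lemma solution_evolve {s} : is_solution alpha s -> s = evolve alpha (fun g => s g 0%N).
Proof.
move=> s_sol; apply: funext => g; apply: funext => t.
elim: t g => [//|t IH] g; rewrite s_sol /=.
by under eq_fsbigr do rewrite IH.
Qed.

Hypothesis alpha_fin_supp : finite_set [set g | alpha g <> cseq 0].

Lemma fsbig_alpha_seq : exists s : seq G, forall t (F : G -> C),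
  \sum_(h \in [set: G]) alpha h t * F h = \sum_(h <- s) alpha h t * F h.
Proof.
have /finite_seqP [s supp_s] := alpha_fin_supp.
exists (undup s) => t F; rewrite (fsbigE (undup s)) ?undup_uniq //.
  by apply: eq_bigl => h; rewrite in_setT.
move=> h _; rewrite mem_undup => h_out; suff -> : alpha h = cseq 0 by rewrite mul0r.
apply: contrapT => h_in; have : [set g | alpha g <> cseq 0] h by [].
by rewrite supp_s /= => hs; rewrite hs in h_out.
Qed.

Lemma evolve0 g t : evolve alpha (fun=> 0) g t = 0.
Proof.
have [s hs] := fsbig_alpha_seq; elim: t g => [//|t IH] g /=.
by rewrite hs big1 // => h _; rewrite IH mulr0.
Qed.

Lemma evolveD f1 f2 g t :
  evolve alpha (fun x => f1 x + f2 x) g t = evolve alpha f1 g t + evolve alpha f2 g t.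
Proof.
have [s hs] := fsbig_alpha_seq; elim: t g => [//|t IH] g /=.
by rewrite !hs -big_split; apply: eq_bigr => h _; rewrite IH mulrDr.
Qed.

Lemma evolve_char (c : C) (theta : G -> C) g t :
  {morph theta : a b / a + b >-> a * b} ->
  evolve alpha (fun x => c * theta x) g t =
  c * theta g * alpha_hat_prod alpha (fun h => theta (- h)) t.
Proof.
move=> thetaD; have [s hs] := fsbig_alpha_seq; elim: t g => [|t IH] g /=.
  by rewrite /alpha_hat_prod big_ord0 mulr1.
rewrite alpha_hat_prodS /alpha_hat !hs mulrA big_distrr /=; apply: eq_bigr => h _.
by rewrite IH thetaD; ring.
Qed.

Lemma sums_of_evolve_subring {S : set (Seq R)} {f} g :
  is_subring S -> (forall c, S (cseq c)) ->
  (forall theta, is_torsion_character theta -> S (alpha_hat_prod alpha theta)) ->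
  sums_of (scaled_torsion_chars R G) f -> S (evolve alpha f g).
Proof.
move=> S_subring S_const S_chars; elim=> [|_ f1 [c [theta [theta_tors ->]]] _ IH].
  by have := subring0 S_subring; congr S; apply: funext => t; rewrite evolve0.
have [[thetaD _] _] := theta_tors.
have := subringD S_subring (subringM S_subring (S_const (c * theta g))
  (S_chars _ (torsion_characterN theta_tors))) IH.
by congr S; apply: funext => t; rewrite evolveD evolve_char.
Qed.

End Evolution.

Definition torsion_char_products {R : realType} {G : zmodType} (alpha : G -> Seq R)
  : set (Seq R) :=
  [set x | exists theta, is_torsion_character theta /\ x = alpha_hat_prod alpha theta].

Section PeriodicSolutions.
Context {R : realType} {G : zmodType} {k : set (Seq R)} {alpha : G -> Seq R}.
Hypotheses (k_base : is_base_ring k) (alpha_supp : fin_supp_in k alpha).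
Local Notation K := (gen_ring (k `|` torsion_char_products alpha)).

Lemma alpha_hat_in_base (theta : G -> R[i]) : k (alpha_hat alpha theta).
Proof.
have [[[k_subring _] k_const] [k_alpha /fsbig_alpha_seq [s hs]]] := (k_base, alpha_supp).
have := subring_sum s (fun h t => alpha h t * cseq (theta h) t) k_subring
  (fun h => subringM k_subring (k_alpha h) (k_const _)).
by congr k; apply: funext => t; rewrite /alpha_hat hs.
Qed.

Lemma gen_ring_torsion_chars_sigma : is_sigma_subring K.
Proof.
have [[_ k_shift] _] := k_base.
apply: gen_ring_sigma => x [kx|[theta [theta_tors ->]]].
  by apply: sub_gen_ring; left; apply: k_shift.
have K_prod : K (alpha_hat_prod alpha theta) by apply: sub_gen_ring; right; exists theta.
have K_hat : K (alpha_hat alpha theta) by apply: sub_gen_ring; left; apply: alpha_hat_in_base.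
have := subringM (gen_ring_subring _) K_prod K_hat.
by congr K; apply: funext => t; rewrite /shift alpha_hat_prodS.
Qed.

Lemma periodic_solution_in_gen_ring {s : G -> Seq R} {H : set G} g :
  is_subgroup H -> finite_index H -> is_solution alpha s -> periodic H s -> K (s g).
Proof.
move=> H_subgroup H_index s_sol s_per; rewrite (solution_evolve s_sol).
apply: (sums_of_evolve_subring alpha_supp.2).
- exact: gen_ring_subring.
- by move=> c; apply: sub_gen_ring; left; case: k_base.
- by move=> theta theta_tors; apply: sub_gen_ring; right; exists theta.
apply: (periodic_sums_of_torsion_chars H_subgroup H_index) => a h Hh /=.
by rewrite s_per.
Qed.

(* The witness is the solution with initial values [g |-> theta (- g)], which
   is periodic modulo its kernel. *)
Lemma torsion_char_product_periodic_solution {theta : G -> R[i]} :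
  is_torsion_character theta -> exists (s : G -> Seq R) (H : set G),
    [/\ is_subgroup H, finite_index H, is_solution alpha s, periodic H s
      & s 0 = alpha_hat_prod alpha theta].
Proof.
move=> /torsion_characterN theta'_tors; set theta' := fun g => theta (- g) in theta'_tors.
have [theta'_char _] := theta'_tors; pose s := evolve alpha (fun x => 1 * theta' x).
have s_char g : s g = fun t => theta' g * alpha_hat_prod alpha theta t.
  apply: funext => t; rewrite /s (evolve_char alpha_supp.2) ?mul1r.
    by congr (_ * alpha_hat_prod _ _ _); apply: funext => h; rewrite /theta' opprK.
  exact: characterD.
exists s, [set g | theta' g = 1]; split.
- exact: character_ker_subgroup.
- exact: torsion_character_ker_finite_index.
- exact: evolve_solution.
- by move=> g h /= theta'h; rewrite !s_char (characterD theta'_char) theta'h mulr1.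
by rewrite s_char (character0 theta'_char) funeqE => t; rewrite mul1r.
Qed.

End PeriodicSolutions.

Theorem theorem2p9 (R : realType) (G : zmodType) (k : set (Seq R))
  (alpha : G -> Seq R) :
  is_base_ring k -> fin_supp_in k alpha ->
  L_per k alpha =
  gen_ring (k `|` [set x | exists theta : G -> R[i],
                       is_torsion_character theta /\ x = alpha_hat_prod alpha theta]).
Proof.
move=> k_base alpha_supp; apply/seteqP; split.
  apply: (gen_sigma_ring_min (gen_ring_torsion_chars_sigma k_base alpha_supp)).
  move=> x [kx|[s [H [g [H_subgroup H_index s_sol s_per ->]]]]].
    by apply: sub_gen_ring; left.
  exact: (periodic_solution_in_gen_ring k_base alpha_supp g H_subgroup H_index).
apply: (gen_ring_min (gen_sigma_ring_sigma _).1).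
move=> x [kx|[theta [theta_tors ->]]]; apply: sub_gen_sigma_ring; first by left.
have [s [H [? ? ? ? <-]]] := torsion_char_product_periodic_solution alpha_supp theta_tors.
by right; exists s, H, 0.
Qed.
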